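(* Let $M_1$ and $M_2$ be matroids on a common ground set $E$ with the same rank $r$, and let $B$ be a common basis of $M_1$ and $M_2$. Then $D_{M_1,M_2}(B)$ is strongly connected if and only if $r_{M_1}(X)+r_{M_2}(E\setminus X)>r$ for every $X$ with $\emptyset\neq X\subsetneq E$.
   Context: $r_{M}$ denotes the rank function of $M$. The digraph $D_{M_1,M_2}(B)$ has vertex set $E$; for each $x\in B$, $y\in E\setminus B$ it has an arc $xy$ if $B-x+y$ is a basis of $M_1$, and an arc $yx$ if $B-x+y$ is a basis of $M_2$. *)

From mathcomp Require Import all_boot.
Set Implicit Arguments. Unset Strict Implicit. Unset Printing Implicit Defensive.

Record matroid (T : finType) := Matroid {
  mindep : {set T} -> bool;
  mindep0 : mindep set0;
  mindep_sub : forall A B : {set T}, A \subset B -> mindep B -> mindep A;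
  mindep_aug : forall A B : {set T}, mindep A -> mindep B -> #|A| < #|B| ->
      exists2 x, x \in B :\: A & mindep (x |: A) }.

Definition mrank (T : finType) (M : matroid T) (X : {set T}) : nat :=
  \max_(Y : {set T} | mindep M Y && (Y \subset X)) #|Y|.

Definition mbasis (T : finType) (M : matroid T) (B : {set T}) : bool :=
  mindep M B && [forall x, (x \notin B) ==> ~~ mindep M (x |: B)].

(* exchange digraph D_{M1,M2}(B) on vertex set T:
   arc x->y if x in B, y notin B, B-x+y basis of M1;
   arc y->x if x in B, y notin B, B-x+y basis of M2. *)
Definition exchange_arc (T : finType) (M1 M2 : matroid T) (B : {set T}) : rel T :=
  fun u v =>
    [&& u \in B, v \notin B & mbasis M1 (v |: (B :\ u))]
    || [&& v \in B, u \notin B & mbasis M2 (u |: (B :\ v))].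

Definition strongly_connected (T : finType) (e : rel T) : Prop :=
  forall u v : T, connect e u v.

From mathcomp Require Import all_boot.
Set Implicit Arguments. Unset Strict Implicit. Unset Printing Implicit Defensive.

(* An arc of D(B) enters a set X exactly when it witnesses r1(X) > |B ∩ X|
   (an M1-exchange x -> y with x outside X and y inside) or r2(E - X) > |B - X|
   (an M2-exchange y -> x with y outside X and x inside).  As B is independent
   in both matroids, |B| = r never exceeds r1(X) + r2(E - X), so some arc enters X
   iff the inequality is strict.  A digraph is strongly connected iff every
   nonempty proper vertex set is entered by an arc. *)

Section StronglyConnected.
Variables (T : finType) (e : rel T).

Lemma connect_enters (X : {set T}) u v :
  connect e u v -> u \notin X -> v \in X ->
  exists a b, [/\ a \notin X, b \in X & e a b].
Proof.
move=> /connectP [p + ->]; elim: p u => [|c p IHp] u /=; first by move=> _ /negPf->.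
case/andP=> euc pe uX; have [cX|cX] := boolP (c \in X); first by exists u, c.
exact: IHp pe cX.
Qed.

Lemma strongly_connectedP :
  strongly_connected e <->
  (forall X : {set T}, X != set0 -> X \proper [set: T] ->
     exists a b, [/\ a \notin X, b \in X & e a b]).
Proof.
split=> [sc X /set0Pn [v vX] /properP [_ [u _ uX]] | enters u v].
  exact: connect_enters (sc u v) uX vX.
apply/idPn=> nuv; pose X := [set w | connect e w v].
have vX : v \in X by rewrite inE connect0.
have X0 : X != set0 by apply/set0Pn; exists v.
have XT : X \proper [set: T] by apply/properP; split; [exact: subsetT | exists u; rewrite ?inE].
have [a [b [+ + eab]]] := enters X X0 XT; rewrite !inE => /negP aX bv.
exact: aX (connect_trans (connect1 eab) bv).
Qed.

End StronglyConnected.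

Section MatroidExchange.
Variables (T : finType) (M : matroid T).
Implicit Types (B I W X Y : {set T}).

Lemma mbasis_indep B : mbasis M B -> mindep M B.
Proof. by case/andP. Qed.

Lemma mbasis_maximal B x : mbasis M B -> x \notin B -> ~~ mindep M (x |: B).
Proof. by case/andP=> _ /forallP/(_ x)/implyP. Qed.

Lemma leq_card_mbasis B Y : mbasis M B -> mindep M Y -> #|Y| <= #|B|.
Proof.
move=> bB iY; rewrite leqNgt; apply/negP=> ltBY.
have [x /setDP [_ xB] ixB] := mindep_aug (mbasis_indep bB) iY ltBY.
by move: (mbasis_maximal bB xB); rewrite ixB.
Qed.

Lemma mindep_card_mbasis B W : mbasis M B -> mindep M W -> #|W| = #|B| -> mbasis M W.
Proof.
move=> bB iW cardW; rewrite /mbasis iW; apply/forallP=> z; apply/implyP=> zW.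
apply/negP=> /(leq_card_mbasis bB); by rewrite cardsU1 zW cardW ltnn.
Qed.

Lemma leq_card_mrank X Y : mindep M Y -> Y \subset X -> #|Y| <= mrank M X.
Proof.
move=> iY sYX; rewrite /mrank.
by apply: (leq_bigmax_cond (F := fun Z : {set T} => #|Z|)); rewrite iY.
Qed.

Lemma mrank_setT_mbasis B : mbasis M B -> mrank M [set: T] = #|B|.
Proof.
move=> bB; apply/eqP; rewrite eqn_leq leq_card_mrank ?subsetT ?mbasis_indep // andbT.
by apply/bigmax_leqP=> Y /andP [iY _]; exact: leq_card_mbasis.
Qed.

Lemma mrank_augment I X : mindep M I -> I \subset X -> #|I| < mrank M X ->
  exists2 y, y \in X :\: I & mindep M (y |: I).
Proof.
move=> iI sIX; rewrite /mrank.
have [|Y /andP [iY sYX] ->] := eq_bigmax_cond (fun Z : {set T} => #|Z|)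
  (A := fun Z : {set T} => mindep M Z && (Z \subset X)).
  by apply/card_gt0P; exists set0; rewrite unfold_in /= mindep0 sub0set.
case/(mindep_aug iI iY)=> y /setDP [yY yI] iyI; exists y => //.
by rewrite inE yI (subsetP sYX).
Qed.

(* Extend y + I to a maximal independent subset Z of y + B; since y + B is
   dependent and |Z| >= |B|, Z is y + B with a single x removed. *)
Lemma mbasis_exchange B I y : mbasis M B -> I \subset B -> y \notin B ->
  mindep M (y |: I) -> exists2 x, x \in B :\: I & mbasis M (y |: (B :\ x)).
Proof.
move=> bB sIB yB iyI; pose S := y |: B.
pose P := fun Z : {set T} => [&& mindep M Z, y |: I \subset Z & Z \subset S].
have Pinit : P (y |: I) by rewrite /P iyI subxx setUS.
case: (arg_maxnP (fun Z : {set T} => #|Z|) Pinit) => Z /and3P [iZ sIZ sZS] maxZ.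
have leBZ : #|B| <= #|Z|.
  rewrite leqNgt; apply/negP=> ltZB.
  have [x /setDP [xB xZ] ixZ] := mindep_aug iZ (mbasis_indep bB) ltZB.
  have /maxZ : P (x |: Z).
    by rewrite /P ixZ (subset_trans sIZ (subsetUr _ _)) subUset sZS sub1set !inE xB orbT.
  by rewrite cardsU1 xZ /= ltnn.
have /subsetPn [x xS xZ] : ~~ (S \subset Z).
  apply: contra (mbasis_maximal bB yB) => sSZ.
  by rewrite -/S (_ : S = Z) //; apply/eqP; rewrite eqEsubset sSZ sZS.
have yZ : y \in Z by apply: (subsetP sIZ); rewrite setU11.
have xy : x != y by apply: contraNneq xZ => ->.
have xB : x \in B by move: xS; rewrite in_setU1 (negbTE xy).
exists x; first by rewrite inE xB andbT; apply: contra xZ => xI; rewrite (subsetP sIZ) // setU1r.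
have sZW : Z \subset y |: (B :\ x).
  apply/subsetP=> z zZ; move: (subsetP sZS z zZ); rewrite !inE => /orP [->//|->].
  by rewrite andbT orbC; apply/orP; left; apply: contraNneq xZ => <-.
have cardW : #|y |: (B :\ x)| = #|B|.
  by rewrite cardsU1 in_setD1 (negbTE yB) andbF (cardsD1 x B) xB.
have eZ : Z = y |: (B :\ x) by apply/eqP; rewrite eqEcard sZW cardW.
by apply: mindep_card_mbasis bB _ cardW; rewrite -eZ.
Qed.

Lemma mrank_gt_exchangeP B Y : mbasis M B ->
  #|B :&: Y| < mrank M Y <->
  exists x y, [/\ x \in B :\: Y, y \in Y :\: B & mbasis M (y |: (B :\ x))].
Proof.
move=> bB; have iB := mbasis_indep bB; split.
  have iBY : mindep M (B :&: Y) by apply: mindep_sub iB; exact: subsetIl.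
  case/(mrank_augment iBY (subsetIr _ _))=> y /setDP [yY yBY] iyBY.
  have yB : y \notin B by apply: contra yBY => yB; rewrite inE yB.
  have [x /setDP [xB xBY] bx] := mbasis_exchange bB (subsetIl _ _) yB iyBY.
  exists x, y; rewrite !inE yB yY xB andbT; split=> //.
  by apply: contra xBY => xY; rewrite inE xB xY.
case=> x [y [/setDP [xB xY] /setDP [yY yB] bx]].
have sBYx : B :&: Y \subset B :\ x.
  by apply/subsetP=> z /setIP [zB zY]; rewrite !inE zB andbT; apply: contraNneq xY => <-.
have iyBY : mindep M (y |: (B :&: Y)).
  by apply: mindep_sub (mbasis_indep bx); exact: setUS.
have : y |: (B :&: Y) \subset Y by rewrite subUset sub1set yY subsetIr.
by move/(leq_card_mrank iyBY); rewrite cardsU1 inE (negbTE yB).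
Qed.

End MatroidExchange.

Section ExchangeGraph.
Variables (T : finType) (M1 M2 : matroid T) (B : {set T}).
Hypotheses (hB1 : mbasis M1 B) (hB2 : mbasis M2 B).

Lemma exchange_arc_entersP (X : {set T}) :
  (exists a b, [/\ a \notin X, b \in X & exchange_arc M1 M2 B a b]) <->
  #|B :&: X| < mrank M1 X \/ #|B :&: ~: X| < mrank M2 (~: X).
Proof.
split.
  case=> a [b [aX bX /orP [/and3P [aB bB bab] | /and3P [bB aB bab]]]].
    by left; apply/(mrank_gt_exchangeP X hB1); exists a, b; rewrite !inE aB aX bB bX.
  by right; apply/(mrank_gt_exchangeP (~: X) hB2); exists b, a; rewrite !inE aB aX bB bX.
case=> [/(mrank_gt_exchangeP X hB1) | /(mrank_gt_exchangeP (~: X) hB2)] [x [y []]];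
  rewrite !inE ?negbK => /andP [xX xB] /andP [yB yX] bxy.
  by exists x, y; rewrite xX yX /exchange_arc xB yB bxy.
by exists y, x; rewrite xX yX /exchange_arc xB yB bxy orbT.
Qed.

Lemma common_mbasis_rank_sumP (X : {set T}) :
  #|B :&: X| < mrank M1 X \/ #|B :&: ~: X| < mrank M2 (~: X) <->
  #|B| < mrank M1 X + mrank M2 (~: X).
Proof.
have le1 : #|B :&: X| <= mrank M1 X.
  by apply: leq_card_mrank (subsetIr _ _); apply: mindep_sub (mbasis_indep hB1); exact: subsetIl.
have le2 : #|B :&: ~: X| <= mrank M2 (~: X).
  by apply: leq_card_mrank (subsetIr _ _); apply: mindep_sub (mbasis_indep hB2); exact: subsetIl.
have cardB : #|B :&: X| + #|B :&: ~: X| = #|B| by rewrite -setDE cardsID.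
rewrite -cardB; split.
  by case=> lt; [rewrite -addSn leq_add | rewrite -addnS leq_add].
have [lt1 | ge1] := ltnP #|B :&: X| (mrank M1 X); first by left.
move=> lt; right; rewrite ltnNge; apply/negP=> ge2.
by move: lt; rewrite ltnNge leq_add.
Qed.

End ExchangeGraph.

Theorem lemma3p12 (T : finType) (M1 M2 : matroid T) (r : nat)
  (hr1 : mrank M1 [set: T] = r) (hr2 : mrank M2 [set: T] = r)
  (B : {set T}) (hB1 : mbasis M1 B) (hB2 : mbasis M2 B) :
  strongly_connected (exchange_arc M1 M2 B) <->
  (forall X : {set T}, X != set0 -> X \proper [set: T] ->
     mrank M1 X + mrank M2 (~: X) > r).
Proof.
(* [hr2] is redundant: B is also a basis of M2. *)
have -> : r = #|B| by rewrite -hr1; exact: mrank_setT_mbasis.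
apply: iff_trans (strongly_connectedP _) _.
split=> cut X X0 XT; have := cut X X0 XT.
  by move/(exchange_arc_entersP hB1 hB2)/(common_mbasis_rank_sumP hB1 hB2).
by move/(common_mbasis_rank_sumP hB1 hB2)/(exchange_arc_entersP hB1 hB2).
Qed.
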